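(* Consider the static power control game with $K\ge 2$ transmitters described in the context, for a fixed realization of the channel gains $g_1,\dots,g_K$. Let $\mathcal{U}_{\mathcal{G}}=\{(u_1(\underline{p}),\dots,u_K(\underline{p})) : \underline{p}\in \prod_{i=1}^K(0,P_i^{\max}]\}$ be the achievable utility region, let $u^{\max}$ be an upper bound on the utilities of all transmitters (so $\mathcal{U}_{\mathcal{G}}\subseteq[0,u^{\max}]^K$), and let $\mathcal{U}_{\mathcal{G}}^C=[0,u^{\max}]^K\setminus\mathcal{U}_{\mathcal{G}}$. If $\mathcal{U}_{\mathcal{G}}$ is convex or $\mathcal{U}_{\mathcal{G}}^C$ is convex, then the utility vector $\underline{u}(\tilde{\underline{p}})=(u_1(\tilde{\underline{p}}),\dots,u_K(\tilde{\underline{p}}))$ is Pareto-optimal, i.e. there is no feasible power profile $\underline{p}$ with $u_i(\underline{p})\ge u_i(\tilde{\underline{p}})$ for all $i$ and strict inequality for some $i$.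
   Context: There are $K\ge2$ transmitters $i\in\mathcal{K}=\{1,\dots,K\}$ sending to one receiver; $\sigma^2>0$ is the noise variance; transmitter $i$ has complex channel gain $g_i$ with $|g_i|^2>0$, transmission rate $R_i>0$, and chooses a transmit power $p_i\in[0,P_i^{\max}]$. For a power profile $\underline{p}=(p_1,\dots,p_K)$, $\mathrm{SINR}_i=\frac{p_i|g_i|^2}{\sum_{j\neq i}p_j|g_j|^2+\sigma^2}$ and the utility (energy efficiency) of transmitter $i$ is $u_i(\underline{p})=\frac{R_i f(\mathrm{SINR}_i)}{p_i}$, where $f$ is a sigmoidal efficiency function (the block success rate), common to all users, with $f(0)=0$. It is assumed that there exists $x_0\in\,]0,\frac{1}{K-1}[$ such that $\frac{f''(x)}{f'(x)}-\frac{2(K-1)}{1-(K-1)x}$ is strictly positive on $]0,x_0[$ and strictly negative on $]x_0,\frac1{K-1}[$; under this assumption $\tilde\gamma$ denotes the unique solution in $]0,\frac1{K-1}[$ of $x[1-(K-1)x]f'(x)-f(x)=0$. The operating point is the power profile $\tilde{\underline{p}}$ with $\tilde p_i=\frac{\sigma^2}{|g_i|^2}\frac{\tilde\gamma}{1-(K-1)\tilde\gamma}$ for all $i$ (it gives every user SINR $\tilde\gamma$); the maximal powers $P_i^{\max}$ are assumed large enough that $\tilde p_i\le P_i^{\max}$. *)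

From Stdlib Require Import Reals Lra List.
From Coquelicot Require Import Coquelicot.
Import ListNotations.
Open Scope R_scope.

Definition convex_on (I : R -> Prop) (f : R -> R) : Prop :=
  forall x y t, I x -> I y -> 0 <= t <= 1 ->
    f (t * x + (1 - t) * y) <= t * f x + (1 - t) * f y.

Definition concave_on (I : R -> Prop) (f : R -> R) : Prop :=
  convex_on I (fun x => - f x).

Definition sigmoidal (f : R -> R) : Prop :=
  f 0 = 0 /\
  filterlim f (at_right 0) (locally (f 0)) /\
  (forall x, 0 < x -> ex_derive f x /\ ex_derive (Derive f) x) /\
  (forall x y, 0 <= x -> x <= y -> f x <= f y) /\
  is_lim f p_infty 1 /\
  (exists xs, 0 < xs /\
     convex_on (fun x => 0 <= x <= xs) f /\
     concave_on (fun x => xs <= x) f).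

Definition sum_others (K i : nat) (a : nat -> R) : R :=
  fold_right Rplus 0
    (map (fun j => if Nat.eqb j i then 0 else a j) (seq 0 K)).

Definition gain2 (g : nat -> C) (j : nat) : R := (Cmod (g j)) ^ 2.

Definition SINR (K : nat) (sigma2 : R) (g : nat -> C) (p : nat -> R) (i : nat) : R :=
  p i * gain2 g i / (sum_others K i (fun j => p j * gain2 g j) + sigma2).

Definition utility (K : nat) (sigma2 : R) (g : nat -> C) (Rate : nat -> R)
    (f : R -> R) (p : nat -> R) (i : nat) : R :=
  Rate i * f (SINR K sigma2 g p i) / p i.

Definition feasible (K : nat) (Pmax : nat -> R) (p : nat -> R) : Prop :=
  forall i, (i < K)%nat -> 0 < p i <= Pmax i.

(* Achievable utility region U_G (vectors are nat -> R, only the first K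
   coordinates are relevant: the set is the cylinder over the region in R^K). *)
Definition utility_region K sigma2 g Rate f Pmax : (nat -> R) -> Prop :=
  fun v => exists p, feasible K Pmax p /\
             forall i, (i < K)%nat -> v i = utility K sigma2 g Rate f p i.

Definition utility_region_compl K sigma2 g Rate f Pmax (umax : R) : (nat -> R) -> Prop :=
  fun v => (forall i, (i < K)%nat -> 0 <= v i <= umax) /\
           ~ utility_region K sigma2 g Rate f Pmax v.

Definition convex_set (S : (nat -> R) -> Prop) : Prop :=
  forall v w t, S v -> S w -> 0 <= t <= 1 ->
    S (fun i => t * v i + (1 - t) * w i).

Definition p_tilde (K : nat) (sigma2 : R) (g : nat -> C) (gt : R) : nat -> R :=
  fun i => sigma2 / gain2 g i * (gt / (1 - (INR K - 1) * gt)).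

Definition pareto_optimal K sigma2 g Rate f Pmax (p0 : nat -> R) : Prop :=
  ~ exists p, feasible K Pmax p /\
      (forall i, (i < K)%nat ->
         utility K sigma2 g Rate f p0 i <= utility K sigma2 g Rate f p i) /\
      (exists i, (i < K)%nat /\
         utility K sigma2 g Rate f p0 i < utility K sigma2 g Rate f p i).

From Stdlib Require Import Reals Lra Lia List.
From Coquelicot Require Import Coquelicot.
Open Scope R_scope.

(* Write c = K - 1 and chi(x) = f(x) (1 - c x) / x.  If every user has the same
   received power q = p_j |g_j|^2, each SINR is q / (c q + sigma2); in general
   the user k with the smallest received power has utility
   R_k |g_k|^2 chi(SINR_k) / (D + sigma2), where D >= 0 is the excess of its
   interference over c times its own received power, and SINR_k < 1/c.
   Since chi'(x) = h(x) / x^2 with h(x) = x (1 - c x) f'(x) - f(x), and h is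
   positive below its unique root gt in ]0, 1/c[ and negative above it, chi has
   a strict maximum at gt.  A profile dominating the operating point must then
   give user k the SINR gt and D = 0, i.e. equal received powers, which forces
   it to be the operating point itself. *)

Lemma continuity_pt_of_is_derive (F : R -> R) x l :
  is_derive F x l -> continuity_pt F x.
Proof.
  intros HF; apply continuity_pt_filterlim.
  apply (ex_derive_continuous F x); now exists l.
Qed.

Lemma derive_nonneg_of_nondecreasing (F : R -> R) x l :
  (forall y, x <= y -> F x <= F y) -> is_derive F x l -> 0 <= l.
Proof.
  intros Hmono HF; apply is_derive_Reals in HF.
  destruct (Rle_or_lt 0 l) as [|Hl]; [assumption|].
  destruct (HF (- l / 2) ltac:(lra)) as [delta Hdelta].
  pose (h := delta / 2).
  assert (Hh : 0 < h < delta) by (pose proof (cond_pos delta); unfold h; lra).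
  specialize (Hdelta h ltac:(lra) ltac:(rewrite Rabs_pos_eq; lra)).
  assert (0 <= (F (x + h) - F x) / h).
  { apply Rdiv_le_0_compat; [|lra]. specialize (Hmono (x + h) ltac:(lra)). lra. }
  apply Rabs_def2 in Hdelta. lra.
Qed.

Lemma le_of_derive_nonneg (F dF : R -> R) a b : a <= b ->
  (forall x, a <= x <= b -> is_derive F x (dF x)) ->
  (forall x, a <= x <= b -> 0 <= dF x) -> F a <= F b.
Proof.
  intros [Hab|<-] HF Hpos; [|lra].
  destruct (MVT_gen F a b dF) as (x & Hx & Hmvt);
    rewrite ?Rmin_left, ?Rmax_right in * by lra.
  - intros x Hx; apply HF; lra.
  - intros x Hx; apply (continuity_pt_of_is_derive _ _ _ (HF x Hx)).
  - specialize (Hpos x Hx). nra.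
Qed.

(* Strict increase although [dF] may vanish at both endpoints: compare through
   two interior points. *)
Lemma lt_of_derive_pos (F dF : R -> R) a b : a < b ->
  (forall x, a <= x <= b -> is_derive F x (dF x)) ->
  (forall x, a <= x <= b -> 0 <= dF x) ->
  (forall x, a < x < b -> 0 < dF x) -> F a < F b.
Proof.
  intros Hab HF Hnn Hpos.
  pose (m1 := (2 * a + b) / 3); pose (m2 := (a + 2 * b) / 3).
  assert (F a <= F m1).
  { apply (le_of_derive_nonneg F dF); unfold m1 in *; intros; try apply HF;
      try apply Hnn; lra. }
  assert (F m1 < F m2).
  { apply (incr_function F a b dF); simpl; unfold m1, m2 in *; try lra;
      intros; [apply HF | apply Hpos]; lra. }
  assert (F m2 <= F b).
  { apply (le_of_derive_nonneg F dF); unfold m2 in *; intros; try apply HF;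
      try apply Hnn; lra. }
  lra.
Qed.

Lemma exists_root_between (F : R -> R) a b : a < b ->
  (forall x, a <= x <= b -> continuity_pt F x) ->
  0 < F a -> F b < 0 -> exists z, a < z < b /\ F z = 0.
Proof.
  intros Hab Hc Ha Hb.
  destruct (Ranalysis5.IVT_interv (fun x => - F x) a b) as (z & Hz & Hz0);
    try lra.
  - intros x Hx; apply continuity_pt_opp, Hc, Hx.
  - assert (z <> a) by (intros ->; lra).
    assert (z <> b) by (intros ->; lra).
    exists z; split; [destruct Hz as [[|] [|]]|]; lra.
Qed.

Lemma nonneg_of_ge_neg_linear (a M delta : R) : 0 < delta -> 0 <= M ->
  (forall z, 0 < z < delta -> - (M * z) <= a) -> 0 <= a.
Proof.
  intros Hdelta HM Hbound.
  destruct (Rle_or_lt 0 a) as [|Ha]; [assumption|].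
  pose (z := Rmin delta (- a / (M + 1)) / 2).
  assert (Hq : 0 < - a / (M + 1)) by (apply Rdiv_lt_0_compat; lra).
  assert (Hz : 0 < z < delta /\ z * (M + 1) < - a).
  { pose proof (Rmin_l delta (- a / (M + 1))); pose proof (Rmin_r delta (- a / (M + 1))).
    pose proof (Rmin_glb_lt delta (- a / (M + 1)) 0 Hdelta Hq).
    assert (- a / (M + 1) * (M + 1) = - a) by (field; lra).
    unfold z; split; [lra|]. nra. }
  specialize (Hbound z (proj1 Hz)). nra.
Qed.

Lemma one_sub_mul_pos c x : 0 < c -> x < 1 / c -> 0 < 1 - c * x.
Proof.
  intros Hc Hx. apply (Rmult_lt_compat_l c) in Hx; [|lra].
  replace (c * (1 / c)) with 1 in Hx by (field; lra). lra.
Qed.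

Definition chi (f : R -> R) (c x : R) : R := f x * (1 - c * x) / x.

Definition chi_num (f : R -> R) (c x : R) : R := x * (1 - c * x) * Derive f x - f x.

Section Sigmoid.

Variables (f : R -> R) (c x0 xs : R).

Hypothesis f_derivable2 : forall x, 0 < x -> ex_derive f x /\ ex_derive (Derive f) x.
Hypothesis f_nondecreasing : forall x y, 0 <= x -> x <= y -> f x <= f y.
Hypothesis f_0 : f 0 = 0.
Hypothesis f_convex : convex_on (fun x => 0 <= x <= xs) f.
Hypothesis xs_pos : 0 < xs.
Hypothesis c_pos : 0 < c.
Hypothesis x0_range : 0 < x0 < 1 / c.
Hypothesis f_ratio_gt : forall x, 0 < x < x0 ->
  Derive (Derive f) x / Derive f x - 2 * c / (1 - c * x) > 0.

Lemma is_derive_f x : 0 < x -> is_derive f x (Derive f x).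
Proof. intros Hx; apply Derive_correct, f_derivable2, Hx. Qed.

Lemma is_derive_Derive_f x : 0 < x -> is_derive (Derive f) x (Derive (Derive f) x).
Proof. intros Hx; apply Derive_correct, f_derivable2, Hx. Qed.

(* [f_ratio_gt] also rules out [Derive f x = 0]: division by zero yields 0
   and the remaining term [- 2 c / (1 - c x)] is negative. *)
Lemma Derive_f_pos x : 0 < x < x0 -> 0 < Derive f x.
Proof.
  intros Hx.
  assert (H1cx : 0 < 1 - c * x) by (apply one_sub_mul_pos; lra).
  assert (Hnn : 0 <= Derive f x).
  { apply (derive_nonneg_of_nondecreasing f x); [|apply is_derive_f; lra].
    intros y Hy; apply f_nondecreasing; lra. }
  destruct Hnn as [|Hz]; [assumption|].
  specialize (f_ratio_gt x Hx). rewrite <- Hz, Rdiv_0_r in f_ratio_gt.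
  assert (0 < 2 * c / (1 - c * x)) by (apply Rdiv_lt_0_compat; lra).
  lra.
Qed.

Lemma Derive2_f_pos x : 0 < x < x0 -> 0 < Derive (Derive f) x.
Proof.
  intros Hx. pose proof (Derive_f_pos x Hx) as Hd.
  assert (0 < 2 * c / (1 - c * x)) by (apply Rdiv_lt_0_compat, one_sub_mul_pos; lra).
  specialize (f_ratio_gt x Hx).
  replace (Derive (Derive f) x) with (Derive (Derive f) x / Derive f x * Derive f x)
    by (field; lra).
  apply Rmult_lt_0_compat; lra.
Qed.

Lemma Derive_f_le a b : 0 < a -> a <= b -> b < x0 -> Derive f a <= Derive f b.
Proof.
  intros Ha Hab Hb.
  apply (le_of_derive_nonneg _ (Derive (Derive f))); [assumption|..];
    intros x Hx; [apply is_derive_Derive_f | apply Rlt_le, Derive2_f_pos]; lra.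
Qed.

Lemma f_pos y : 0 < y -> 0 < f y.
Proof.
  intros Hy. pose (m := Rmin y (x0 / 2)).
  assert (Hm : 0 < m <= y /\ m < x0).
  { pose proof (Rmin_l y (x0 / 2)); pose proof (Rmin_r y (x0 / 2)).
    pose proof (Rmin_glb_lt y (x0 / 2) 0 Hy ltac:(lra)). unfold m; lra. }
  assert (f (m / 2) < f m).
  { apply (incr_function f 0 x0 (Derive f)); simpl; try lra;
      intros; [apply is_derive_f | apply Derive_f_pos]; lra. }
  assert (f 0 <= f (m / 2)) by (apply f_nondecreasing; lra).
  assert (f m <= f y) by (apply f_nondecreasing; lra).
  lra.
Qed.

(* Convexity with [f 0 = 0] gives [f (z/2) <= f z / 2]; the mean value theorem
   on [z/2, z], with [Derive f] nondecreasing, bounds the other half. *)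
Lemma f_le_mul_Derive z : 0 < z -> z <= xs -> z < x0 -> f z <= z * Derive f z.
Proof.
  intros Hz Hzs Hz0.
  assert (Hhalf : f (z / 2) <= f z / 2).
  { pose proof (f_convex z 0 (1 / 2) ltac:(lra) ltac:(lra) ltac:(lra)) as H.
    rewrite f_0 in H. replace (1 / 2 * z + (1 - 1 / 2) * 0) with (z / 2) in H by field.
    lra. }
  destruct (MVT_gen f (z / 2) z (Derive f)) as (x & Hx & Hmvt);
    rewrite ?Rmin_left, ?Rmax_right in * by lra.
  - intros x Hx; apply is_derive_f; lra.
  - intros x Hx; apply (continuity_pt_of_is_derive _ _ _ (is_derive_f x ltac:(lra))).
  - assert (Derive f x <= Derive f z) by (apply Derive_f_le; lra).
    nra.
Qed.

Lemma is_derive_chi_num x : 0 < x ->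
  is_derive (chi_num f c) x (x * ((1 - c * x) * Derive (Derive f) x - 2 * c * Derive f x)).
Proof.
  intros Hx. destruct (f_derivable2 x Hx).
  unfold chi_num. auto_derive; [tauto|].
  change (fun y => f y) with f; change (fun y => Derive f y) with (Derive f). ring.
Qed.

Lemma chi_num_increasing a b : 0 < a -> a < b -> b < x0 -> chi_num f c a < chi_num f c b.
Proof.
  intros Ha Hab Hb.
  apply (incr_function _ 0 x0 _ (fun x H1 H2 => is_derive_chi_num x H1)); simpl; try lra.
  intros x Hx1 Hx2.
  assert (H1cx : 0 < 1 - c * x) by (apply one_sub_mul_pos; lra).
  pose proof (Derive_f_pos x ltac:(lra)). specialize (f_ratio_gt x ltac:(lra)).
  replace ((1 - c * x) * Derive (Derive f) x - 2 * c * Derive f x)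
    with (Derive f x * (1 - c * x)
          * (Derive (Derive f) x / Derive f x - 2 * c / (1 - c * x))) by (field; lra).
  apply Rmult_gt_0_compat; [lra|]. apply Rmult_gt_0_compat; [|lra].
  apply Rmult_gt_0_compat; lra.
Qed.

(* Near 0, [chi_num f c z >= - c z^2 f'(z)] tends to 0 while [chi_num f c]
   increases on [0, x0]: so it is positive there. *)
Lemma chi_num_pos y : 0 < y < x0 -> 0 < chi_num f c y.
Proof.
  intros Hy. pose (z1 := y / 2).
  assert (0 <= chi_num f c z1).
  { apply (nonneg_of_ge_neg_linear _ (c * z1 * Derive f z1) (Rmin z1 xs)).
    - apply Rmin_glb_lt; unfold z1; lra.
    - pose proof (Derive_f_pos z1 ltac:(unfold z1; lra)).
      apply Rmult_le_pos; [apply Rmult_le_pos|]; unfold z1 in *; lra.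
    - intros z Hz. pose proof (Rmin_l z1 xs); pose proof (Rmin_r z1 xs).
      assert (chi_num f c z < chi_num f c z1) by (apply chi_num_increasing; unfold z1 in *; lra).
      assert (f z <= z * Derive f z) by (apply f_le_mul_Derive; unfold z1 in *; lra).
      assert (Derive f z <= Derive f z1) by (apply Derive_f_le; unfold z1 in *; lra).
      pose proof (Derive_f_pos z ltac:(unfold z1 in *; lra)).
      assert (c * z * (z * Derive f z) <= c * z * (z1 * Derive f z1)).
      { apply Rmult_le_compat_l; [nra|]. apply Rmult_le_compat; unfold z1 in *; lra. }
      unfold chi_num in *. nra. }
  assert (chi_num f c z1 < chi_num f c y) by (apply chi_num_increasing; unfold z1; lra).
  lra.
Qed.

Lemma chi_num_at_inv_neg : chi_num f c (1 / c) < 0.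
Proof.
  unfold chi_num. replace (1 - c * (1 / c)) with 0 by (field; lra).
  pose proof (f_pos (1 / c) ltac:(apply Rdiv_lt_0_compat; lra)). lra.
Qed.

Lemma is_derive_chi x : 0 < x -> is_derive (chi f c) x (chi_num f c x / (x * x)).
Proof.
  intros Hx. destruct (f_derivable2 x Hx).
  unfold chi, chi_num. auto_derive; [repeat split; auto; lra|].
  change (fun y => f y) with f. field. lra.
Qed.

Variable gt : R.
Hypothesis gt_range : 0 < gt < 1 / c.
Hypothesis chi_num_gt : chi_num f c gt = 0.
Hypothesis chi_num_root_unique : forall x, 0 < x < 1 / c -> chi_num f c x = 0 -> x = gt.

Lemma continuity_pt_chi_num x : 0 < x -> continuity_pt (chi_num f c) x.
Proof. intros Hx; exact (continuity_pt_of_is_derive _ _ _ (is_derive_chi_num x Hx)). Qed.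

Lemma chi_num_no_root a b : 0 < a < b -> b <= 1 / c -> gt < a \/ b < gt ->
  0 < chi_num f c a -> chi_num f c b < 0 -> False.
Proof.
  intros Ha Hb Hgt Hpa Hnb.
  destruct (exists_root_between (chi_num f c) a b) as (z & Hz & Hz0); try lra.
  - intros x Hx; apply continuity_pt_chi_num; lra.
  - apply chi_num_root_unique in Hz0; lra.
Qed.

Lemma chi_num_pos_below x : 0 < x < gt -> 0 < chi_num f c x.
Proof.
  intros Hx. pose (y := Rmin x x0 / 2).
  assert (Hy : 0 < y < x /\ y < x0).
  { pose proof (Rmin_l x x0); pose proof (Rmin_r x x0).
    pose proof (Rmin_glb_lt x x0 0 ltac:(lra) ltac:(lra)). unfold y; lra. }
  destruct (Rlt_or_le 0 (chi_num f c x)) as [|[Hneg|Hzero]]; [assumption| |].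
  - exfalso; apply (chi_num_no_root y x); try lra.
    apply chi_num_pos; lra.
  - apply chi_num_root_unique in Hzero; lra.
Qed.

Lemma chi_num_neg_above x : gt < x < 1 / c -> chi_num f c x < 0.
Proof.
  intros Hx.
  destruct (Rlt_or_le (chi_num f c x) 0) as [|[Hpos|Hzero]]; [assumption| |].
  - exfalso; apply (chi_num_no_root x (1 / c)); try lra.
    apply chi_num_at_inv_neg.
  - symmetry in Hzero; apply chi_num_root_unique in Hzero; lra.
Qed.

Lemma chi_lt_chi_gt t : 0 < t < 1 / c -> t <> gt -> chi f c t < chi f c gt.
Proof.
  intros Ht Hne.
  assert (Hsq : forall x, 0 < x -> 0 < x * x) by (intros; nra).
  destruct (Rlt_or_le t gt) as [Hlt|Hle].
  - apply (lt_of_derive_pos _ (fun x => chi_num f c x / (x * x))); [assumption|..];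
      intros x Hx.
    + apply is_derive_chi; lra.
    + destruct (Req_dec x gt) as [->|]; [rewrite chi_num_gt; lra|].
      apply Rlt_le, Rdiv_lt_0_compat; [apply chi_num_pos_below|apply Hsq]; lra.
    + apply Rdiv_lt_0_compat; [apply chi_num_pos_below|apply Hsq]; lra.
  - apply Ropp_lt_cancel.
    apply (lt_of_derive_pos (fun x => - chi f c x) (fun x => - (chi_num f c x / (x * x))));
      [lra|..]; intros x Hx.
    + exact (is_derive_opp (chi f c) x _ (is_derive_chi x ltac:(lra))).
    + destruct (Req_dec x gt) as [->|]; [rewrite chi_num_gt; lra|].
      rewrite <- Rdiv_opp_l; apply Rlt_le, Rdiv_lt_0_compat; [|apply Hsq; lra].
      apply Ropp_0_gt_lt_contravar, chi_num_neg_above; lra.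
    + rewrite <- Rdiv_opp_l; apply Rdiv_lt_0_compat; [|apply Hsq; lra].
      apply Ropp_0_gt_lt_contravar, chi_num_neg_above; lra.
Qed.

End Sigmoid.

Lemma sum_map_le (a b : nat -> R) l : (forall j, In j l -> a j <= b j) ->
  fold_right Rplus 0 (map a l) <= fold_right Rplus 0 (map b l).
Proof.
  induction l as [|x l IH]; intros Hab; simpl; [lra|].
  pose proof (Hab x (in_eq x l)). pose proof (IH (fun j Hj => Hab j (in_cons x j l Hj))).
  lra.
Qed.

Lemma sum_map_lt (a b : nat -> R) l j : (forall k, In k l -> a k <= b k) ->
  In j l -> a j < b j -> fold_right Rplus 0 (map a l) < fold_right Rplus 0 (map b l).
Proof.
  induction l as [|x l IH]; intros Hab Hj Hlt; [destruct Hj|simpl].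
  pose proof (Hab x (in_eq x l)).
  assert (Hl : forall k, In k l -> a k <= b k) by (intros k Hk; apply Hab, in_cons, Hk).
  destruct Hj as [<-|Hj].
  - pose proof (sum_map_le a b l Hl). lra.
  - pose proof (IH Hl Hj Hlt). lra.
Qed.

Lemma sum_seq_const_avoid i r s n : (i < s)%nat ->
  fold_right Rplus 0 (map (fun j => if Nat.eqb j i then 0 else r) (seq s n)) = INR n * r.
Proof.
  revert s; induction n as [|n IH]; intros s Hs; cbn [seq map fold_right]; [simpl; ring|].
  replace (Nat.eqb s i) with false by (symmetry; apply Nat.eqb_neq; lia).
  rewrite IH, S_INR by lia. ring.
Qed.

Lemma sum_seq_const_except i r s n : (s <= i < s + n)%nat ->
  fold_right Rplus 0 (map (fun j => if Nat.eqb j i then 0 else r) (seq s n)) = (INR n - 1) * r.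
Proof.
  revert s; induction n as [|n IH]; intros s Hs; [lia|cbn [seq map fold_right]].
  rewrite S_INR. destruct (Nat.eqb_spec s i) as [<-|Hne].
  - rewrite sum_seq_const_avoid by lia. ring.
  - rewrite IH by lia. ring.
Qed.

Lemma sum_others_const K i r : (i < K)%nat -> sum_others K i (fun _ => r) = (INR K - 1) * r.
Proof. intros Hi; unfold sum_others; apply sum_seq_const_except; lia. Qed.

Lemma sum_others_ext K i a b : (forall j, (j < K)%nat -> a j = b j) ->
  sum_others K i a = sum_others K i b.
Proof.
  intros Hab; unfold sum_others; f_equal; apply map_ext_in.
  intros j Hj; apply in_seq in Hj. rewrite Hab by lia. reflexivity.
Qed.

Lemma sum_others_ge_min K i a : (i < K)%nat -> (forall j, (j < K)%nat -> a i <= a j) ->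
  (INR K - 1) * a i <= sum_others K i a.
Proof.
  intros Hi Hmin. rewrite <- (sum_others_const K i (a i)) by assumption.
  apply sum_map_le. intros j Hj; apply in_seq in Hj.
  destruct (Nat.eqb j i); [lra|]. apply Hmin; lia.
Qed.

Lemma sum_others_eq_min K i a : (i < K)%nat -> (forall j, (j < K)%nat -> a i <= a j) ->
  sum_others K i a = (INR K - 1) * a i -> forall j, (j < K)%nat -> a j = a i.
Proof.
  intros Hi Hmin Hsum j Hj. destruct (Hmin j Hj) as [Hlt|]; [exfalso|auto].
  assert (Hji : j <> i) by (intros ->; lra).
  rewrite <- (sum_others_const K i (a i)) in Hsum by assumption.
  apply (Rlt_irrefl (sum_others K i (fun _ => a i))). rewrite <- Hsum at 2.
  apply (sum_map_lt _ _ _ j).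
  - intros l Hl; apply in_seq in Hl. destruct (Nat.eqb l i); [lra|]. apply Hmin; lia.
  - apply in_seq; lia.
  - apply Nat.eqb_neq in Hji. rewrite Hji. assumption.
Qed.

Lemma exists_min_index (a : nat -> R) n : (0 < n)%nat ->
  exists k, (k < n)%nat /\ forall j, (j < n)%nat -> a k <= a j.
Proof.
  induction n as [|n IH]; intros Hn; [lia|].
  destruct (Nat.eq_dec n 0) as [->|Hn0].
  { exists 0%nat. split; [lia|]. intros j Hj. replace j with 0%nat by lia. lra. }
  destruct (IH ltac:(lia)) as (k & Hk & Hmin).
  destruct (Rle_lt_dec (a k) (a n)) as [Hkn|Hnk].
  - exists k. split; [lia|]. intros j Hj.
    destruct (Nat.eq_dec j n) as [->|]; [assumption|]. apply Hmin; lia.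
  - exists n. split; [lia|]. intros j Hj.
    destruct (Nat.eq_dec j n) as [->|]; [lra|]. specialize (Hmin j ltac:(lia)). lra.
Qed.

Definition received (g : nat -> C) (p : nat -> R) (j : nat) : R := p j * gain2 g j.

Lemma utility_ext K sigma2 g Rate f p p' i :
  (forall j, (j < K)%nat -> p j = p' j) -> (i < K)%nat ->
  utility K sigma2 g Rate f p i = utility K sigma2 g Rate f p' i.
Proof.
  intros Hpp' Hi. unfold utility, SINR.
  rewrite (Hpp' i Hi), (sum_others_ext K i _ (fun j => p' j * gain2 g j)); [reflexivity|].
  intros j Hj; rewrite (Hpp' j Hj); reflexivity.
Qed.

Section Game.

Variables (K : nat) (sigma2 : R) (g : nat -> C) (Rate : nat -> R) (f : R -> R) (gt : R).

Local Notation c := (INR K - 1).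
Local Notation u := (utility K sigma2 g Rate f).

Hypothesis K_ge_2 : (2 <= K)%nat.
Hypothesis sigma2_pos : 0 < sigma2.
Hypothesis gain2_pos : forall j, (j < K)%nat -> 0 < gain2 g j.
Hypothesis Rate_pos : forall j, (j < K)%nat -> 0 < Rate j.
Hypothesis gt_range : 0 < gt < 1 / c.
Hypothesis f_gt_pos : 0 < f gt.
Hypothesis chi_gt_strict_max : forall t, 0 < t < 1 / c -> t <> gt -> chi f c t < chi f c gt.

Lemma c_ge_1 : 1 <= c.
Proof. apply le_INR in K_ge_2. simpl in K_ge_2. lra. Qed.

Lemma one_sub_c_gt_pos : 0 < 1 - c * gt.
Proof. apply one_sub_mul_pos; [pose proof c_ge_1|]; lra. Qed.

Lemma utility_chi p i : (i < K)%nat -> 0 < received g p i ->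
  0 < sum_others K i (received g p) - c * received g p i + sigma2 ->
  u p i = Rate i * gain2 g i * chi f c (SINR K sigma2 g p i)
          / (sum_others K i (received g p) - c * received g p i + sigma2).
Proof.
  intros Hi Hq Hs. pose proof (gain2_pos i Hi). pose proof c_ge_1.
  assert (0 < sum_others K i (received g p) + sigma2) by nra.
  unfold utility, chi, SINR, received in *.
  assert (p i <> 0) by (intros E; rewrite E in Hq; lra).
  field. repeat split; lra.
Qed.

Lemma SINR_equal_received p q i : (i < K)%nat ->
  (forall j, (j < K)%nat -> received g p j = q) -> SINR K sigma2 g p i = q / (c * q + sigma2).
Proof.
  intros Hi Hq. unfold SINR.
  change (fun j => p j * gain2 g j) with (received g p).
  rewrite (sum_others_ext K i _ (fun _ => q)), sum_others_const by assumption.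
  change (p i * gain2 g i) with (received g p i). rewrite (Hq i Hi). reflexivity.
Qed.

Lemma received_p_tilde j : (j < K)%nat ->
  received g (p_tilde K sigma2 g gt) j = sigma2 * (gt / (1 - c * gt)).
Proof.
  intros Hj. pose proof (gain2_pos j Hj). pose proof one_sub_c_gt_pos.
  unfold received, p_tilde. field. repeat split; lra.
Qed.

Lemma SINR_p_tilde i : (i < K)%nat -> SINR K sigma2 g (p_tilde K sigma2 g gt) i = gt.
Proof.
  intros Hi. pose proof one_sub_c_gt_pos.
  rewrite (SINR_equal_received _ _ _ Hi received_p_tilde). field. split; lra.
Qed.

Lemma p_tilde_of_equal_received p q : 0 <= q ->
  (forall j, (j < K)%nat -> received g p j = q) -> q / (c * q + sigma2) = gt ->
  forall j, (j < K)%nat -> p j = p_tilde K sigma2 g gt j.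
Proof.
  intros Hq0 Hq Hgt j Hj. pose proof c_ge_1. pose proof one_sub_c_gt_pos.
  assert (HQ : q = sigma2 * (gt / (1 - c * gt))).
  { rewrite <- Hgt. field. split; nra. }
  rewrite HQ, <- (received_p_tilde j Hj) in Hq.
  apply (Rmult_eq_reg_r (gain2 g j)); [apply Hq, Hj|].
  pose proof (gain2_pos j Hj). lra.
Qed.

Lemma chi_dominance gam D : 0 < gam < 1 / c -> 0 <= D ->
  chi f c gt / sigma2 <= chi f c gam / (D + sigma2) -> gam = gt /\ D = 0.
Proof.
  intros Hgam HD Hle. pose proof one_sub_c_gt_pos.
  assert (Hchi : 0 < chi f c gt) by (unfold chi; apply Rdiv_lt_0_compat; [nra|lra]).
  assert (Hgam_chi : 0 < chi f c gam).
  { destruct (Rlt_or_le 0 (chi f c gam)) as [|Hn]; [assumption|].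
    assert (0 <= - chi f c gam / (D + sigma2)) by (apply Rdiv_le_0_compat; lra).
    rewrite Rdiv_opp_l in *.
    assert (0 < chi f c gt / sigma2) by (apply Rdiv_lt_0_compat; lra). lra. }
  assert (Hdiv : chi f c gam / (D + sigma2) <= chi f c gam / sigma2).
  { apply Rmult_le_compat_l; [lra|]. apply Rinv_le_contravar; lra. }
  assert (Heq : gam = gt).
  { destruct (Req_dec gam gt) as [|Hne]; [assumption|].
    pose proof (chi_gt_strict_max gam Hgam Hne).
    assert (chi f c gam / sigma2 < chi f c gt / sigma2)
      by (apply Rmult_lt_compat_r; [apply Rinv_0_lt_compat|]; lra).
    lra. }
  split; [assumption|]. subst gam.
  destruct HD as [HD|]; [exfalso|auto].
  assert (chi f c gt / (D + sigma2) < chi f c gt / sigma2)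
    by (apply Rmult_lt_compat_l; [|apply Rinv_lt_contravar; nra]; lra).
  lra.
Qed.

Lemma utility_p_tilde i : (i < K)%nat ->
  u (p_tilde K sigma2 g gt) i = Rate i * gain2 g i * chi f c gt / sigma2.
Proof.
  intros Hi. pose proof c_ge_1. pose proof one_sub_c_gt_pos.
  assert (HQ : 0 < sigma2 * (gt / (1 - c * gt)))
    by (apply Rmult_lt_0_compat; [|apply Rdiv_lt_0_compat]; lra).
  assert (HS : sum_others K i (received g (p_tilde K sigma2 g gt))
               = c * (sigma2 * (gt / (1 - c * gt))))
    by (rewrite (sum_others_ext K i _ _ received_p_tilde); apply sum_others_const, Hi).
  rewrite utility_chi; rewrite ?SINR_p_tilde, ?HS, ?received_p_tilde by exact Hi;
    [f_equal; ring | exact Hi | exact HQ | lra].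
Qed.

Lemma min_received_eq_p_tilde p k :
  (forall j, (j < K)%nat -> 0 < p j) -> (k < K)%nat ->
  (forall j, (j < K)%nat -> received g p k <= received g p j) ->
  u (p_tilde K sigma2 g gt) k <= u p k ->
  forall j, (j < K)%nat -> p j = p_tilde K sigma2 g gt j.
Proof.
  intros Hp Hk Hmin Hdom. pose proof c_ge_1. pose proof one_sub_c_gt_pos.
  set (q := received g p).
  set (D := sum_others K k q - c * q k).
  assert (Hqk : 0 < q k) by (apply Rmult_lt_0_compat; [apply Hp|apply gain2_pos]; exact Hk).
  assert (HD : 0 <= D) by (pose proof (sum_others_ge_min K k q Hk Hmin); unfold D; lra).
  assert (Hgam : 0 < SINR K sigma2 g p k < 1 / c).
  { unfold SINR; change (fun j => p j * gain2 g j) with q; change (p k * gain2 g k) with (q k).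
    assert (HS : 0 < sum_others K k q + sigma2) by (unfold D in HD; nra).
    split; [apply Rdiv_lt_0_compat; lra|].
    assert (1 / c - q k / (sum_others K k q + sigma2)
            = (D + sigma2) / (c * (sum_others K k q + sigma2))) by (unfold D; field; lra).
    assert (0 < (D + sigma2) / (c * (sum_others K k q + sigma2)))
      by (apply Rdiv_lt_0_compat; [|apply Rmult_lt_0_compat]; lra).
    lra. }
  assert (HDs : 0 < D + sigma2) by lra.
  rewrite utility_p_tilde, (utility_chi p k Hk Hqk HDs) in Hdom by assumption.
  fold q D in Hdom. rewrite <- !Rmult_div_assoc in Hdom.
  apply Rmult_le_reg_l in Hdom;
    [|apply Rmult_lt_0_compat; [apply Rate_pos|apply gain2_pos]; exact Hk].
  destruct (chi_dominance _ _ Hgam HD Hdom) as [Hgt HD0].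
  assert (Hq : forall j, (j < K)%nat -> q j = q k).
  { apply sum_others_eq_min; [assumption..|]. unfold D in HD0; lra. }
  apply (p_tilde_of_equal_received p (q k)); [lra|assumption|].
  rewrite <- (SINR_equal_received p (q k) k Hk Hq). exact Hgt.
Qed.

End Game.

Theorem proposition5
  (K : nat) (HK : (2 <= K)%nat)
  (sigma2 : R) (Hsigma : 0 < sigma2)
  (g : nat -> C) (Hg : forall i, (i < K)%nat -> 0 < Cmod (g i))
  (Rate : nat -> R) (HR : forall i, (i < K)%nat -> 0 < Rate i)
  (Pmax : nat -> R)
  (f : R -> R) (Hf : sigmoidal f)
  (Hx0 : exists x0, 0 < x0 < 1 / (INR K - 1) /\
     (forall x, 0 < x < x0 ->
        Derive (Derive f) x / Derive f x
          - 2 * (INR K - 1) / (1 - (INR K - 1) * x) > 0) /\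
     (forall x, x0 < x < 1 / (INR K - 1) ->
        Derive (Derive f) x / Derive f x
          - 2 * (INR K - 1) / (1 - (INR K - 1) * x) < 0))
  (gt : R) (Hgt : 0 < gt < 1 / (INR K - 1))
  (Hgt_sol : gt * (1 - (INR K - 1) * gt) * Derive f gt - f gt = 0)
  (Hgt_uniq : forall x, 0 < x < 1 / (INR K - 1) ->
     x * (1 - (INR K - 1) * x) * Derive f x - f x = 0 -> x = gt)
  (HPmax : forall i, (i < K)%nat -> p_tilde K sigma2 g gt i <= Pmax i)
  (umax : R)
  (Humax : forall p, feasible K Pmax p ->
     forall i, (i < K)%nat -> 0 <= utility K sigma2 g Rate f p i <= umax)
  (Hconv : convex_set (utility_region K sigma2 g Rate f Pmax) \/
           convex_set (utility_region_compl K sigma2 g Rate f Pmax umax)) :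
  pareto_optimal K sigma2 g Rate f Pmax (p_tilde K sigma2 g gt).
Proof.
  destruct Hf as (Hf0 & _ & Hderiv & Hmono & _ & xs & Hxs & Hconvex & _).
  destruct Hx0 as (x0 & Hx0 & Hratio & _).
  assert (Hc : 0 < INR K - 1) by (apply le_INR in HK; simpl in HK; lra).
  assert (Hgain : forall j, (j < K)%nat -> 0 < gain2 g j)
    by (intros j Hj; pose proof (Hg j Hj); unfold gain2; simpl; nra).
  intros (p & Hfeas & Hdom & i & Hi & Hlt).
  assert (Hfgt : 0 < f gt) by (apply (f_pos f (INR K - 1) x0); auto; lra).
  assert (Hmax : forall t, 0 < t < 1 / (INR K - 1) -> t <> gt ->
                   chi f (INR K - 1) t < chi f (INR K - 1) gt)
    by (intros t Ht Hne; apply (chi_lt_chi_gt f (INR K - 1) x0 xs); auto).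
  destruct (exists_min_index (received g p) K ltac:(lia)) as (k & Hk & Hmin).
  assert (Hp : forall j, (j < K)%nat -> p j = p_tilde K sigma2 g gt j).
  { apply (min_received_eq_p_tilde K sigma2 g Rate f gt) with k; auto.
    intros j Hj; apply Hfeas, Hj. }
  rewrite (utility_ext K sigma2 g Rate f p _ i Hp Hi) in Hlt. lra.
Qed.
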